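(* Let $\varphi\in\mathcal{L}$. If there is a multi-agent graded belief model (MAGBM) $(S,U)$ with $(S,U)\models\varphi$, then there is a quasi-notional graded doxastic model (QNGDM) $M$ and a world $w$ of $M$ with $(M,w)\models\varphi$.
   Context: Fix a countably infinite set of atoms $\mathit{Atm}$ and a finite set of agents $\mathit{Agt}=\{1,\dots,n\}$; a group is a non-empty subset $J\subseteq\mathit{Agt}$, $2^{\mathit{Agt}*}$ the set of groups. $\mathbb{N}_0$ (resp. $\mathbb{N}_1$) are the naturals with (resp. without) $0$; $\mathbb{N}_0^{\omega}=\mathbb{N}_0\cup\{\omega\}$, $\mathbb{N}_1^{\omega}=\mathbb{N}_1\cup\{\omega\}$ with $\omega$ infinite. A multiset over $X$ is a function $X\to\mathbb{N}_0^{\omega}$. A possibly infinite sum of grades equals the sum of its non-zero summands if there are finitely many and none is $\omega$, and $\omega$ otherwise. For $k\in\mathbb{N}_0$ and group $J$, $P(J,k)$ is the set of $\delta:J\to\mathbb{N}_0$ with $\sum_{i\in J}\delta(i)=k$. $\mathcal{L}_0$: $\alpha::=p\mid\neg\alpha\mid\alpha\wedge\alpha\mid\triangle_i^k\alpha$ ($p\in\mathit{Atm}$, $i\in\mathit{Agt}$, $k\in\mathbb{N}_1^{\omega}$). $\mathcal{L}$: $\varphi::=\alpha\mid\neg\varphi\mid\varphi\wedge\varphi\mid\Box_J^k\varphi$ ($\alpha\in\mathcal{L}_0$, $J$ a group, $k\in\mathbb{N}_0$). MAGBM semantics: a state is $S=(\mathcal{B}_1,\dots,\mathcal{B}_n,V)$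 with each $\mathcal{B}_i$ a multiset over $\mathcal{L}_0$ and $V\subseteq\mathit{Atm}$; $\mathbf{S}$ is the set of states. $S\models p$ iff $p\in V$; Boolean clauses as usual; $S\models\triangle_i^k\alpha$ iff $\mathcal{B}_i(\alpha)\ge k$. For a group $J$, $\mathcal{B}_J(\alpha)=\sum_{i\in J}\mathcal{B}_i(\alpha)$; for $k\in\mathbb{N}_0$, $S\mathcal{R}_J^kS'$ iff $\sum_{\alpha\in\mathcal{L}_0,S'\not\models\alpha}\mathcal{B}_J(\alpha)\le k$. An MAGBM is a pair $(S,U)$ with $S\in\mathbf{S}$, $U\subseteq\mathbf{S}$; $(S,U)\models\alpha$ iff $S\models\alpha$ for $\alpha\in\mathcal{L}_0$; Boolean clauses as usual; $(S,U)\models\Box_J^k\varphi$ iff for all $S'\in U$ with $S\mathcal{R}_J^kS'$, $(S',U)\models\varphi$. QNGDM: a tuple $M=(W,\mathcal{D},\rho,\mathcal{V})$ with $W$ a set of worlds, $\mathcal{D}:\mathit{Agt}\times W\to$ (multisets over $\mathcal{L}_0$), $\rho:2^{\mathit{Agt}*}\times W\times W\to\mathbb{N}_0^{\omega}$, $\mathcal{V}:\mathit{Atm}\to2^W$, with satisfaction $(M,w)\models p$ iff $w\in\mathcal{V}(p)$; Boolean clauses as usual; $(M,w)\models\triangle_i^k\alpha$ iff $\mathcal{D}(i,w)(\alpha)\ge k$; $(M,w)\models\Box_J^k\varphi$ iff for all $u\in W$ with $\rho(J,w,u)\le k$, $(M,u)\models\varphi$; and such that for every group $J$ and $w,u\in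 W$ with $\rho(J,w,u)\ne\omega$: (i) $\rho(J,w,u)\ge\sum_{\alpha\in\mathcal{L}_0,(M,u)\not\models\alpha}\sum_{i\in J}\mathcal{D}(i,w)(\alpha)$; (ii) there is $\delta\in P(J,\rho(J,w,u))$ with $\sum_{i\in J'}\delta(i)\ge\rho(J',w,u)$ for every non-empty $J'\subset J$. *)

From mathcomp Require Import all_boot.
From Stdlib Require Import List ClassicalEpsilon.
Set Implicit Arguments. Unset Strict Implicit. Unset Printing Implicit Defensive.

Inductive grade := Fin of nat | Omega.

Definition grade_le (a b : grade) : Prop :=
  match a, b with
  | _, Omega => True
  | Omega, Fin _ => False
  | Fin x, Fin y => (x <= y)%N
  end.

Inductive pgrade := PFin (k : nat) of (0 < k)%N | POmega.
Definition grade_of_pgrade (k : pgrade) : grade :=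
  match k with PFin m _ => Fin m | POmega => Omega end.

Definition fin_val (g : grade) : nat := match g with Fin k => k | Omega => 0 end.

(* Possibly infinite sum of the grades f x over the x with P x:
   the sum of the non-zero summands if there are finitely many and none is
   omega, and omega otherwise. [s] enumerates exactly the non-zero summands. *)
Definition gsum_spec {X : Type} (P : X -> Prop) (f : X -> grade) (s : list X) : Prop :=
  List.NoDup s /\ (forall x, List.In x s <-> (P x /\ f x <> Fin 0))
  /\ (forall x, P x -> f x <> Omega).

Definition gsum {X : Type} (P : X -> Prop) (f : X -> grade) : grade :=
  match excluded_middle_informative (exists s, gsum_spec P f s) with
  | left h =>
      Fin (List.fold_right (fun x acc => fin_val (f x) + acc) 0
             (proj1_sig (constructive_indefinite_description _ h)))
  | right _ => Omega
  end.

Section Lang.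
Variable n : nat.  (* agents are 'I_n, i.e. {1,...,n} *)

Definition group := {J : {set 'I_n} | J != set0}.

Inductive form0 :=
  | Atom0 (p : nat)
  | Neg0 (a : form0)
  | And0 (a b : form0)
  | Tri (i : 'I_n) (k : pgrade) (a : form0).

Inductive form :=
  | Base (a : form0)
  | Neg (f : form)
  | And (f g : form)
  | Box (J : group) (k : nat) (f : form).

Fixpoint sat0 (val : nat -> Prop) (B : 'I_n -> form0 -> grade) (a : form0) : Prop :=
  match a with
  | Atom0 p => val p
  | Neg0 b => ~ sat0 val B b
  | And0 b c => sat0 val B b /\ sat0 val B c
  | Tri i k b => grade_le (grade_of_pgrade k) (B i b)
  end.

Definition BJ (B : 'I_n -> form0 -> grade) (J : group) (a : form0) : grade :=
  gsum (fun i => i \in proj1_sig J) (fun i => B i a).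

Record state := mkState { SB : 'I_n -> form0 -> grade; SV : nat -> Prop }.

Definition sat_state (S : state) (a : form0) : Prop := sat0 (SV S) (SB S) a.

Definition Rel (J : group) (k : nat) (S S' : state) : Prop :=
  grade_le (gsum (fun a => ~ sat_state S' a) (BJ (SB S) J)) (Fin k).

Fixpoint satM (U : state -> Prop) (S : state) (f : form) : Prop :=
  match f with
  | Base a => sat_state S a
  | Neg g => ~ satM U S g
  | And g h => satM U S g /\ satM U S h
  | Box J k g => forall S', U S' -> Rel J k S S' -> satM U S' g
  end.

End Lang.

Record qframe (n : nat) := mkQ {
  qW : Type;
  qD : 'I_n -> qW -> form0 n -> grade;
  qrho : group n -> qW -> qW -> grade;
  qV : nat -> qW -> Prop }.
Arguments qW {n} q.
Arguments qD {n} q _ _ _.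
Arguments qrho {n} q _ _ _.
Arguments qV {n} q _ _.

Definition sat0W {n : nat} (M : qframe n) (w : qW M) (a : form0 n) : Prop :=
  sat0 (fun p => qV M p w) (fun i => qD M i w) a.

Fixpoint satQ {n : nat} (M : qframe n) (w : qW M) (f : form n) : Prop :=
  match f with
  | Base a => sat0W w a
  | Neg g => ~ satQ w g
  | And g h => satQ w g /\ satQ w h
  | Box J k g => forall u : qW M, grade_le (qrho M J w u) (Fin k) -> satQ u g
  end.

Definition is_QNGDM {n : nat} (M : qframe n) : Prop :=
  forall (J : group n) (w u : qW M), qrho M J w u <> Omega ->
    (* (i) *)
    grade_le (gsum (fun a => ~ sat0W u a) (BJ (fun i => qD M i w) J)) (qrho M J w u)
    (* (ii) *)
    /\ (exists delta : 'I_n -> nat,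
          Fin (\sum_(i in proj1_sig J) delta i)%N = qrho M J w u
          /\ forall J' : group n, proj1_sig J' \proper proj1_sig J ->
               grade_le (qrho M J' w u) (Fin (\sum_(i in proj1_sig J') delta i)%N)).

From Stdlib Require Import List Permutation ClassicalEpsilon.
From mathcomp Require Import all_boot.

Set Implicit Arguments.
Unset Strict Implicit.
Unset Printing Implicit Defensive.

(* The MAGBM (S, U) is itself a QNGDM: its worlds are the states, D is given
   by the belief multisets and rho(J, S, S') is the cost
   sum_{alpha false at S'} B_J(alpha) when S' is in U, and omega otherwise.
   Then the box clauses of both semantics coincide and truth transfers by
   induction on formulas.  Condition (i) holds with equality.  For (ii), a
   finite cost has finitely many non-zero summands, all finite, so
   delta(i) := sum_{alpha false at S'} B_i(alpha) splits the cost over the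
   agents and gives rho(J') exactly for every J' included in J. *)

Lemma grade_le_refl (g : grade) : grade_le g g.
Proof. by case: g => //= k; rewrite leqnn. Qed.

Lemma leq_sum_subset (T : finType) (A B : {set T}) (F : T -> nat) :
  A \subset B -> (\sum_(i in A) F i <= \sum_(i in B) F i).
Proof. by move=> /subsetP AB; apply: (sub_le_big leqnn (fun m k => leq_addr k m)). Qed.

Lemma In_mem (T : eqType) (x : T) (s : seq T) : List.In x s <-> x \in s.
Proof.
elim: s => [|y s IHs] //=; rewrite in_cons IHs.
by split=> [[->|->] | /orP[/eqP ->|->]]; rewrite ?eqxx ?orbT; auto.
Qed.

Lemma uniq_NoDup (T : eqType) (s : seq T) : uniq s -> NoDup s.
Proof.
elim: s => [|x s IHs] /=; first by constructor.
by case/andP=> x_notin s_uniq; constructor; [rewrite In_mem; apply/negP | apply: IHs].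
Qed.

Section GradeSums.

Variable X : Type.
Implicit Types (P : X -> Prop) (f : X -> grade) (h g : X -> nat) (s t : list X).

Lemma fold_right_sumE h s :
  List.fold_right (fun x acc => h x + acc) 0 s = \sum_(x <- s) h x.
Proof. by elim: s => [|x s IHs] /=; rewrite ?big_nil ?big_cons ?IHs. Qed.

Lemma eq_sum_In h g s :
  (forall x, List.In x s -> h x = g x) -> \sum_(x <- s) h x = \sum_(x <- s) g x.
Proof.
elim: s => [|x s IHs] eq_hg; rewrite ?big_nil ?big_cons // eq_hg /=; last by left.
by rewrite IHs // => y sy; apply: eq_hg; right.
Qed.

Lemma sum_Permutation h s t :
  Permutation s t -> \sum_(x <- s) h x = \sum_(x <- t) h x.
Proof.
elim=> [|x s' t' _ IHst|x y s'|s' t' u _ IHst _ IHtu]; rewrite ?big_cons //.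
- by rewrite IHst.
- by rewrite addnCA.
- by rewrite IHst.
Qed.

Lemma sum_NoDup_support h s t : NoDup s -> NoDup t ->
  (forall x, h x <> 0 -> List.In x s) -> (forall x, h x <> 0 -> List.In x t) ->
  \sum_(x <- s) h x = \sum_(x <- t) h x.
Proof.
move=> s_uniq t_uniq s_supp t_supp.
(* [List.filter] and seq's [filter] are convertible, so [big_filter] applies. *)
have drop0 r : \sum_(x <- r) h x = \sum_(x <- List.filter (fun x => h x != 0) r) h x.
  by rewrite [RHS](big_filter r) [RHS]big_mkcond; apply: eq_bigr => x _; case: eqP.
rewrite drop0 [RHS]drop0; apply/sum_Permutation/NoDup_Permutation; try exact: NoDup_filter.
by move=> x; rewrite !filter_In; split=> -[_ /eqP hx]; (split; last exact/eqP); auto.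
Qed.

Definition fin_val_on P f (x : X) : nat :=
  if excluded_middle_informative (P x) then fin_val (f x) else 0.

Lemma fin_val_onE P f x : P x -> fin_val_on P f x = fin_val (f x).
Proof. by rewrite /fin_val_on; case: excluded_middle_informative. Qed.

Lemma fin_val_on_neq0 P f x : fin_val_on P f x <> 0 -> P x /\ f x <> Fin 0.
Proof.
rewrite /fin_val_on; case: excluded_middle_informative => // Px.
by case: (f x) => // k k_neq0; split=> // -[].
Qed.

Lemma gsumE P f s : NoDup s -> (forall x, P x -> f x <> Omega) ->
  (forall x, P x -> f x <> Fin 0 -> List.In x s) ->
  gsum P f = Fin (\sum_(x <- s) fin_val_on P f x).
Proof.
move=> s_uniq f_fin s_supp.
have supp_on x : fin_val_on P f x <> 0 -> List.In x s.
  by case/fin_val_on_neq0; apply: s_supp.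
rewrite /gsum; case: excluded_middle_informative => [ex | []]; last first.
  exists (List.filter (fun x => fin_val_on P f x != 0) s).
  split; first exact: NoDup_filter.
  split=> // x; rewrite filter_In; split=> [[_ /eqP fx_on] | [Px fx]].
    exact: fin_val_on_neq0.
  have fx_on : fin_val_on P f x <> 0.
    by rewrite fin_val_onE //; move: fx (f_fin x Px); case: (f x) => // -[].
  by split; [exact: supp_on | apply/eqP].
case: constructive_indefinite_description => s0 [s0_uniq [s0_supp _]] /=.
congr Fin; rewrite fold_right_sumE.
rewrite (@eq_sum_In _ (fin_val_on P f)); last first.
  by move=> x /s0_supp [Px _]; rewrite fin_val_onE.
apply: sum_NoDup_support => // x /fin_val_on_neq0 Pfx.
exact/s0_supp.
Qed.

Lemma gsum_neq_Omega P f : gsum P f <> Omega ->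
  (forall x, P x -> f x <> Omega) /\
  exists s, NoDup s /\ forall x, P x -> f x <> Fin 0 -> List.In x s.
Proof.
rewrite /gsum; case: excluded_middle_informative => // -[s [s_uniq [s_supp f_fin]]] _.
by split=> //; exists s; split=> // x Px fx; apply/s_supp.
Qed.

End GradeSums.

Lemma gsum_set (T : finType) (J : {set T}) (f : T -> grade) :
  (forall i, i \in J -> f i <> Omega) ->
  gsum (fun i => i \in J) f = Fin (\sum_(i in J) fin_val (f i)).
Proof.
move=> f_fin; rewrite (@gsumE _ _ _ (enum T)) //.
- congr Fin; rewrite big_enum [RHS]big_mkcond; apply: eq_bigr => i _.
  case: ifP => iJ; first exact: fin_val_onE.
  by rewrite /fin_val_on; case: excluded_middle_informative; rewrite iJ.
- exact/uniq_NoDup/enum_uniq.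
- by move=> i _ _; rewrite In_mem mem_enum.
Qed.

Lemma gsum_BJ_additive n (B : 'I_n -> form0 n -> grade) (P : form0 n -> Prop)
    (J : group n) :
  gsum P (BJ B J) <> Omega ->
  exists delta : 'I_n -> nat, forall J' : group n, proj1_sig J' \subset proj1_sig J ->
    gsum P (BJ B J') = Fin (\sum_(i in proj1_sig J') delta i).
Proof.
move=> /gsum_neq_Omega [BJ_fin [s [s_uniq s_supp]]].
have BJ_sum (J' : group n) a : proj1_sig J' \subset proj1_sig J -> P a ->
    BJ B J' a = Fin (\sum_(i in proj1_sig J') fin_val (B i a)).
  move=> /subsetP J'J Pa; apply: gsum_set => i /J'J iJ.
  exact: (proj1 (gsum_neq_Omega (BJ_fin a Pa)) i iJ).
exists (fun i => \sum_(a <- s) fin_val_on P (B i) a) => J' J'J.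
rewrite (gsumE s_uniq).
- congr Fin; rewrite exchange_big /=; apply: eq_bigr => a _.
  rewrite /fin_val_on; case: excluded_middle_informative => Pa.
    by rewrite BJ_sum.
  by rewrite big1.
- by move=> a Pa; rewrite BJ_sum.
- move=> a Pa; rewrite BJ_sum // => sumJ'_neq0.
  apply: s_supp => //; rewrite BJ_sum ?subxx // => -[sumJ0].
  apply: sumJ'_neq0; congr Fin; apply/eqP.
  by rewrite -leqn0 -[X in _ <= X]sumJ0 leq_sum_subset.
Qed.

Section CanonicalModel.

Variables (n : nat) (U : state n -> Prop).

Definition cost (J : group n) (S S' : state n) : grade :=
  gsum (fun a => ~ sat_state S' a) (BJ (SB S) J).

Definition magbm_frame : qframe n :=
  @mkQ n (state n) (fun i S a => SB S i a)
    (fun J S S' => if excluded_middle_informative (U S') then cost J S S' else Omega)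
    (fun p S => SV S p).

Lemma magbm_rhoE J S S' : U S' -> qrho magbm_frame J S S' = cost J S S'.
Proof. by move=> US' /=; case: excluded_middle_informative. Qed.

Lemma satQ_magbm (phi : form n) (S : state n) :
  @satQ n magbm_frame S phi <-> satM U S phi.
Proof.
elim: phi S => [a | g IHg | g IHg h IHh | J k g IHg] S /=.
- by [].
- by rewrite IHg.
- by rewrite IHg IHh.
- split=> [box_g S' US' rel | box_g S'].
    by apply/IHg/box_g; case: excluded_middle_informative.
  by case: excluded_middle_informative => // US' rel; apply/IHg/box_g.
Qed.

Lemma magbm_frame_QNGDM : is_QNGDM magbm_frame.
Proof.
move=> J S S' rho_fin.
have US' : U S' by move: rho_fin => /=; case: excluded_middle_informative.
rewrite magbm_rhoE // in rho_fin *.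
split; first exact: grade_le_refl.
have [delta cost_sum] := gsum_BJ_additive rho_fin.
exists delta; split; first by rewrite /cost cost_sum.
by move=> J' /proper_sub J'J; rewrite magbm_rhoE // /cost cost_sum //; apply: grade_le_refl.
Qed.

End CanonicalModel.

Theorem lemma4 (n : nat) (phi : form n) :
  (exists (S : state n) (U : state n -> Prop), satM U S phi) ->
  exists (M : qframe n) (w : qW M), is_QNGDM M /\ satQ w phi.
Proof.
move=> [S [U sat_phi]]; exists (magbm_frame U), S.
by split; [exact: magbm_frame_QNGDM | apply/satQ_magbm].
Qed.
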